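(* For all integers $n\ge 2$ and $M\ge 1$, $C_{AD}(n,M)\le C_{CD}(n,M)\le (n-1)\log_2 M$.
   Context: There are $n$ nodes labeled $1,\dots,n$; node $i$ privately holds an input $x_i\in\{1,\dots,M\}$. Communication is over private point-to-point links of a fully connected synchronous network. A deterministic protocol $P$ is a fixed finite schedule of steps $l=1,\dots,L(P)$; in step $l$ a prescribed node $T_l$ sends to a prescribed node $R_l\neq T_l$ one symbol $f_l(x_{T_l},T_l^+(l))$, where $T_l^+(l)$ is the sequence of symbols $T_l$ has received in steps $1,\dots,l-1$; only $R_l$ receives it. Its complexity is $C(P)=\sum_{l}\log_2 S_l(P)$, with $S_l(P)$ the number of distinct values of the step-$l$ symbol over all inputs in $\{1,\dots,M\}^n$. At the end each node $i$ outputs a bit $EQ_i$ depending on $x_i$ and the symbols it received. $P$ solves MEQ-AD$(n,M)$ if for every input, $EQ_1=\cdots=EQ_n=0$ iff $x_1=\cdots=x_n$; $P$ solves MEQ-CD$(n,M)$ if for every input, $EQ_n=0$ iff $x_1=\cdots=x_n$. $C_{AD}(n,M)$ and $C_{CD}(n,M)$ are the infima of $C(P)$ over protocols solving MEQ-AD$(n,M)$, respectively MEQ-CD$(n,M)$. *)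

From HB Require Import structures.
From mathcomp Require Import all_boot all_order all_algebra.
From mathcomp Require Import all_classical all_reals.
From mathcomp Require Import exp.
Set Implicit Arguments. Unset Strict Implicit. Unset Printing Implicit Defensive.
Import Order.TTheory GRing.Theory Num.Theory.

(* Nodes 1..n are represented by 'I_n (node i+1 <-> ordinal i; node n is
   ord_max); input values 1..M are represented by 'I_M (value v+1 <-> v).
   Symbols are natural numbers (the alphabet is unrestricted; the cost only
   counts how many distinct values a step actually takes). *)

Record protocol (n M : nat) := Protocol {
  plen : nat;
  psend : nat -> 'I_n;                         (* T_l (step l is index l, 0-based) *)
  precv : nat -> 'I_n;
  pmsg : nat -> 'I_M -> seq nat -> nat;        (* f_l (own input, received so far) *)
  pout : 'I_n -> 'I_M -> seq nat -> bool       (* EQ_i (own input, all received); false = 0 *)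
}.

Section Exec.
Variables (n M : nat) (P : protocol n M).

Definition received (s : seq nat) (i : 'I_n) : seq nat :=
  [seq nth 0 s k | k <- iota 0 (size s) & precv P k == i].

Fixpoint transcript (x : 'I_n -> 'I_M) (l : nat) : seq nat :=
  match l with
  | 0 => [::]
  | l'.+1 => let s := transcript x l' in
             rcons s (pmsg P l' (x (psend P l')) (received s (psend P l')))
  end.

Definition step_symbol (x : 'I_n -> 'I_M) (l : nat) : nat :=
  nth 0 (transcript x (plen P)) l.

Definition output (x : 'I_n -> 'I_M) (i : 'I_n) : bool :=
  pout P i (x i) (received (transcript x (plen P)) i).

Definition well_formed : Prop := forall l, l < plen P -> psend P l != precv P l.

Definition nb_values (l : nat) : nat :=
  size (undup (map (fun f : {ffun 'I_n -> 'I_M} => step_symbol (fun i => f i) l)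
                    (enum {ffun 'I_n -> 'I_M}))).

Definition all_equal (x : 'I_n -> 'I_M) : Prop := forall i j, x i = x j.

Definition solves_AD : Prop :=
  well_formed /\ forall x : 'I_n -> 'I_M, (forall i, output x i = false) <-> all_equal x.

(* node n (the ordinal with value n-1) decides *)
Definition solves_CD : Prop :=
  well_formed /\ forall (x : 'I_n -> 'I_M) (i : 'I_n), val i = n.-1 ->
    (output x i = false <-> all_equal x).
End Exec.

Local Open Scope ring_scope.
Local Open Scope classical_set_scope.

Definition log2 {R : realType} (r : R) : R := ln r / ln 2.

Definition cost {R : realType} {n M : nat} (P : protocol n M) : R :=
  \sum_(l < plen P) log2 ((nb_values P l)%:R).

Definition C_AD (R : realType) (n M : nat) : R :=
  inf [set c : R | exists P : protocol n M, solves_AD P /\ c = cost P].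

Definition C_CD (R : realType) (n M : nat) : R :=
  inf [set c : R | exists P : protocol n M, solves_CD P /\ c = cost P].

(** The naive protocol, in which every node but the last sends its input to
    node [n] using one of [M] symbols, solves MEQ-CD at cost
    [(n - 1) log2 M]. Any MEQ-CD protocol becomes an MEQ-AD protocol of the
    same cost once every node other than node [n] is made to always output
    [0]: the messages are unchanged, so only node [n] can report inequality,
    and it does so exactly when the inputs differ. *)

From mathcomp Require Import all_boot all_order all_algebra.
From mathcomp Require Import all_classical all_reals.
From mathcomp Require Import exp.
Import Order.TTheory GRing.Theory Num.Theory.
Local Open Scope ring_scope.
Local Open Scope classical_set_scope.
Set Implicit Arguments. Unset Strict Implicit.

Lemma log2_nat_ge0 (R : realType) (k : nat) : 0 <= log2 (k%:R : R).
Proof.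
rewrite /log2 divr_ge0 //; last exact/ltW/ln_gt0/ltr1n.
by case: k => [|k]; [rewrite ln0 | apply: ln_ge0; rewrite ler1n].
Qed.

Lemma ler_log2_nat (R : realType) (k m : nat) : (k <= m)%N ->
  log2 (k%:R : R) <= log2 (m%:R : R).
Proof.
case: k => [|k] hkm; first by rewrite [X in X <= _]/log2 ln0 // mul0r log2_nat_ge0.
rewrite /log2 ler_pM2r ?invr_gt0 ?ln_gt0 ?ltr1n //.
by rewrite ler_ln ?posrE ?ltr0n ?ler_nat //; apply: leq_trans hkm.
Qed.

Lemma inf_le_inf_dominated (R : realType) (A B : set R) :
  has_lbound A -> nonempty B -> (forall b, B b -> exists2 a, A a & a <= b) ->
  inf A <= inf B.
Proof.
move=> lbA neB domBA; apply: lb_le_inf => // b /domBA [a Aa leab].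
exact: le_trans (ge_inf lbA Aa) leab.
Qed.

Section Cost.
Variables (R : realType) (n M : nat).

Lemma cost_ge0 (P : protocol n M) : 0 <= (cost P : R).
Proof. by apply: sumr_ge0 => l _; exact: log2_nat_ge0. Qed.

Lemma has_lbound_costs (S : protocol n M -> Prop) :
  has_lbound [set c : R | exists P : protocol n M, S P /\ c = cost P].
Proof. by exists 0 => c [P [_ ->]]; exact: cost_ge0. Qed.

Lemma nb_values_le (P : protocol n M) (l m : nat) :
  (forall x, step_symbol P x l < m)%N -> (nb_values P l <= m)%N.
Proof.
move=> symbol_lt; rewrite /nb_values -[m in (_ <= m)%N](size_iota 0).
apply: uniq_leq_size; first exact: undup_uniq.
by move=> k; rewrite mem_undup => /mapP [f _ ->]; rewrite mem_iota add0n symbol_lt.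
Qed.

Lemma cost_le_bounded_symbols (P : protocol n M) (m : nat) :
  (forall x l, l < plen P -> step_symbol P x l < m)%N ->
  (cost P : R) <= (plen P)%:R * log2 (m%:R : R).
Proof.
move=> symbol_lt; rewrite mulr_natl -[in X in _ <= X](card_ord (plen P)) -sumr_const.
by apply: ler_sum => l _; apply/ler_log2_nat/nb_values_le => x; apply: symbol_lt.
Qed.

End Cost.

Section SilenceAllButDecider.
Variables (n M : nat) (P : protocol n M).

Definition AD_of_CD : protocol n M :=
  Protocol (plen P) (psend P) (precv P) (pmsg P)
    (fun i v r => (val i == n.-1) && pout P i v r).

(* [AD_of_CD] sends the same messages as [P], so their transcripts agree by
   conversion. *)
Lemma output_AD_of_CD x i :
  output AD_of_CD x i = (val i == n.-1) && output P x i.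
Proof. by []. Qed.

Lemma cost_AD_of_CD (R : realType) : (cost AD_of_CD : R) = cost P.
Proof. by []. Qed.

Lemma AD_of_CD_solves : (0 < n)%N -> solves_CD P -> solves_AD AD_of_CD.
Proof.
move=> n_gt0 [wf decideP]; split=> // x.
have decider_lt : (n.-1 < n)%N by rewrite prednK.
split=> [silent | eqx].
- apply/(decideP x (Ordinal decider_lt)) => //.
  by have := silent (Ordinal decider_lt); rewrite output_AD_of_CD eqxx.
- move=> i; rewrite output_AD_of_CD; case: eqP => //= /decideP.
  by move/(_ x) => ->.
Qed.

End SilenceAllButDecider.

Section Gather.
Variables (n M : nat).

(* Step [l] sends the input of node [l + 1] to node [n + 1], as the integer
   [x_(l+1) - 1]; node [n + 1] outputs [1] iff some received value differs
   from its own. *)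
Definition gather : protocol n.+1 M :=
  Protocol n (fun l => inord l) (fun _ => ord_max) (fun _ v _ => val v)
    (fun _ v r => ~~ all (fun k => k == val v) r).

Lemma transcript_gather x l :
  transcript gather x l = [seq val (x (inord k)) | k <- iota 0 l].
Proof.
elim: l => // l IH; by rewrite [LHS]/= IH -addn1 iotaD map_cat cats1.
Qed.

Lemma received_gather_last s : received gather s ord_max = s.
Proof.
rewrite /received (@eq_filter _ _ predT) ?filter_predT; first exact: mkseq_nth.
by move=> k /=; rewrite eqxx.
Qed.

Lemma output_gather_last x : output gather x ord_max =
  ~~ all (fun k => k == val (x ord_max)) [seq val (x (inord k)) | k <- iota 0 n].
Proof. by rewrite /output received_gather_last transcript_gather. Qed.

Lemma gather_well_formed : well_formed gather.
Proof.
move=> l l_lt /=; apply/eqP => /(congr1 val) /=.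
by rewrite inordK ?(leq_trans l_lt) // => l_eq; rewrite l_eq ltnn in l_lt.
Qed.

Lemma gather_solves : solves_CD gather.
Proof.
split; first exact: gather_well_formed.
move=> x i i_last; have -> : i = ord_max by apply: val_inj.
rewrite output_gather_last; split=> [/negbFE/allP agree | eqx].
- suff eq_last j : x j = x ord_max by move=> a b; rewrite !eq_last.
  have [j_lt | j_ge] := ltnP j n; last first.
    by congr x; apply: val_inj; apply/eqP; rewrite eqn_leq j_ge -ltnS ltn_ord.
  apply/val_inj/eqP; rewrite -[j in x j]inord_val.
  by apply: agree; apply: map_f; rewrite mem_iota add0n j_lt.
- apply/negbF/allP => k /mapP [j _ ->].
  by rewrite (eqx _ ord_max).
Qed.

Lemma cost_gather (R : realType) :
  (cost gather : R) <= n%:R * log2 (M%:R : R).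
Proof.
apply: cost_le_bounded_symbols => x l l_lt.
by rewrite /step_symbol transcript_gather (nth_map 0) ?size_iota // ltn_ord.
Qed.

End Gather.

Theorem mainTheorem5 (R : realType) (n M : nat) (hn : (2 <= n)%N) (hM : (1 <= M)%N) :
  C_AD R n M <= C_CD R n M /\ C_CD R n M <= (n.-1)%:R * log2 (M%:R : R).
Proof.
case: n hn => [|n] // _ /=.
have gather_CD : [set c : R | exists P : protocol n.+1 M,
    solves_CD P /\ c = cost P] (cost (gather n M)).
  by exists (gather n M); split; [exact: gather_solves|].
split.
- apply: inf_le_inf_dominated; first exact: has_lbound_costs.
    by exists (cost (gather n M)).
  move=> _ [P [CD_P ->]]; exists (cost P) => //.
  by exists (AD_of_CD P); rewrite cost_AD_of_CD; split=> //; exact: AD_of_CD_solves.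
- exact: le_trans (ge_inf (has_lbound_costs _ _) gather_CD) (cost_gather _ _ _).
Qed.
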